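(* Let $M=\frac{1}{3^{2/3}-2}$. Let the open intervals $J_n^k\subset[0,M]$ ($n\ge 1$, $1\le k\le 2^{n-1}$) be constructed as follows: $J_1^1$ is the open interval of length $3^{-2/3}$ centered at the midpoint of $[0,M]$; for $n\ge 2$, the intervals $J_n^1,\dots,J_n^{2^{n-1}}$ are the open intervals of length $(3^{2/3})^{-n}$ centered at the midpoints of the $2^{n-1}$ connected components of $[0,M]\setminus(J_1\cup\dots\cup J_{n-1})$, where $J_m=\bigcup_{k=1}^{2^{m-1}}J_m^k$. Let $A=[0,M]\setminus\bigcup_{n\ge1}J_n$. Define $g:[0,M]\to\mathbb{R}$ by $g=0$ on $A$ and $g(x)=\frac{4}{\mathcal{L}(J_n^k)^{1/2}}\mathrm{dist}(x,\partial J_n^k)$ for $x\in J_n^k$, and define $f:[0,M]\to[0,1]$ by $f(x)=\int_0^x g(t)\,dt$. Let $C\subset[0,1]$ be the ternary Cantor set. Then: (1) $f$ is $C^1$; (2) $f'(x)=0$ if and only if $x\in A$; (3) $f(A)=C$.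
   Context: $\mathcal{L}$ denotes Lebesgue measure (length); $\partial J$ is the set of endpoints of an interval $J$. The ternary Cantor set is $C=[0,1]\setminus\bigcup_{n\ge1}\bigcup_{k=1}^{2^{n-1}}I_n^k$, where the open intervals $I_n^k$ of length $3^{-n}$ are centered at the midpoints of the connected components of $[0,1]$ minus the previously removed intervals of stages $1,\dots,n-1$. *)

From HB Require Import structures.
From mathcomp Require Import all_boot all_order all_algebra.
From mathcomp Require Import all_classical all_reals all_analysis.
Set Implicit Arguments. Unset Strict Implicit. Unset Printing Implicit Defensive.
Import Order.TTheory GRing.Theory Num.Theory.
Import numFieldNormedType.Exports.
Local Open Scope classical_set_scope.
Local Open Scope ring_scope.

Section Construction.
Variable R : realType.

(* Generic "middle-interval removal" construction on [0, L]: at stage n >= 1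
   one removes, from each connected component [a,b] of what is left after
   stages 1..n-1, the open interval of length q^-n centered at (a+b)/2.
   Intervals are encoded as pairs (left endpoint, right endpoint). *)

Fixpoint comps (L q : R) (n : nat) : seq (R * R) :=
  match n with
  | 0%N => [:: (0, L)]
  | m.+1 =>
      let h := (q ^+ m.+1)^-1 / 2 in
      flatten [seq [:: (ab.1, (ab.1 + ab.2) / 2 - h); ((ab.1 + ab.2) / 2 + h, ab.2)]
              | ab <- comps L q m]
  end.

(* Jstage L q n (for n >= 1) = the list of the 2^(n-1) open intervals
   J_n^k (k = 1..2^(n-1)) removed at stage n, as endpoint pairs. *)
Definition Jstage (L q : R) (n : nat) : seq (R * R) :=
  let h := (q ^+ n)^-1 / 2 in
  [seq ((ab.1 + ab.2) / 2 - h, (ab.1 + ab.2) / 2 + h) | ab <- comps L q n.-1].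

Definition removed (L q : R) : set R :=
  [set x | exists n : nat, (0 < n)%N /\
     exists2 ab, ab \in Jstage L q n & ab.1 < x < ab.2].

Definition cantor_ternary : set R := `[0, 1] `\` removed 1 3.

Definition q23 : R := 3 `^ (2 / 3).
Definition Mconst : R := (q23 - 2)^-1.
Definition Aset : set R := `[0, Mconst] `\` removed Mconst q23.

(* derivative of f at x relative to the set D (one-sided at endpoints of an
   interval) *)
Definition has_deriv_within (D : set R) (f : R -> R) (x l : R) : Prop :=
  (fun y => (f y - f x) / (y - x)) @ within D (x^') --> l.

End Construction.

From HB Require Import structures.
From mathcomp Require Import all_boot all_order all_algebra.
From mathcomp Require Import all_classical all_reals all_analysis.
From mathcomp Require Import ring lra.
Import Order.TTheory GRing.Theory Num.Theory.
Import numFieldNormedType.Exports.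
Local Open Scope classical_set_scope.
Local Open Scope ring_scope.

(* Both [0, M] and [0, 1] are cut by one self-similar rule: when L (q - 2) = 1 the
   first gap, of length 1/q, is ]L/q, L - L/q[, and the gaps of stage n + 1 are the
   images of those of stage n under the contractions x |-> x/q and
   x |-> x/q + (L - L/q) onto the two remaining components; (L, q) is (M, 3^(2/3))
   for A and (1, 3) for C.
   On a gap of length l the density g is a tent of height 2 sqrt l, so
   g(y)^2 <= 8 |y - x| for x in A: g is continuous, f is C^1 with f' = g, and g
   vanishes exactly on A.  Contracting a tent by 1/q divides it by sqrt q, hence
   f(x/q) = f(x) / (q sqrt q) = f(x) / 3, while the first gap carries mass
   l sqrt l = 1/3.  So f(M) = 1 and f conjugates the two contractions of [0, M] to
   x |-> x/3 and x |-> x/3 + 2/3; by induction on the stage, f maps every gap of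
   [0, M] into the ternary gap of the same stage and A into C, and the intermediate
   value theorem gives f(A) = C. *)

Set Implicit Arguments.
Unset Strict Implicit.

Local Notation mu := lebesgue_measure.

Section SelfSimilarGaps.
Variables (R : realType) (L q : R).
Hypotheses (q_gt2 : 2 < q) (Lq2 : L * (q - 2) = 1).

Definition contr0 (x : R) := x / q.
Definition contr1 (x : R) := x / q + (L - L / q).
Definition map_ends (f : R -> R) (ab : R * R) := (f ab.1, f ab.2).

Definition halfgap (k : nat) := (q ^+ k)^-1 / 2.
Definition middle k (ab : R * R) :=
  ((ab.1 + ab.2) / 2 - halfgap k, (ab.1 + ab.2) / 2 + halfgap k).
Definition halves k (ab : R * R) := [:: (ab.1, (middle k ab).1); ((middle k ab).2, ab.2)].

Definition gap (n : nat) (x : R) :=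
  exists2 ab, ab \in Jstage L q n.+1 & ab.1 < x < ab.2.

Lemma q_gt0 : 0 < q. Proof. by apply: lt_trans q_gt2. Qed.
Lemma q_neq0 : q != 0. Proof. by rewrite gt_eqF // q_gt0. Qed.

Lemma L_gt0 : 0 < L.
Proof.
have : 0 < L * (q - 2) by rewrite Lq2.
by rewrite pmulr_lgt0 // subr_gt0.
Qed.

Lemma L_div_q : L / q = L / 2 - q^-1 / 2.
Proof.
apply: (mulIf q_neq0); rewrite divfK ?q_neq0 // mulrBl.
have -> : q^-1 / 2 * q = 1 / 2 by field; rewrite q_neq0.
have -> : L / 2 * q = (L * (q - 2) + 2 * L) / 2 by ring.
by rewrite Lq2; field.
Qed.

Lemma L_sub_L_div_q : L - L / q = L / 2 + q^-1 / 2.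
Proof. rewrite L_div_q; lra. Qed.

Lemma first_gap_bounds : 0 < L / q < L - L / q.
Proof.
rewrite L_sub_L_div_q divr_gt0 ?L_gt0 ?q_gt0 //=.
by rewrite L_div_q ltrD2l gtrN // divr_gt0 // invr_gt0 q_gt0.
Qed.

Lemma halfgapS k : halfgap k.+1 = halfgap k / q.
Proof. by rewrite /halfgap exprS invfM; field; rewrite expf_neq0 ?q_neq0. Qed.

Lemma middle_contr0 k ab :
  middle k.+1 (map_ends contr0 ab) = map_ends contr0 (middle k ab).
Proof.
by rewrite /middle /map_ends /contr0 /= halfgapS; congr (_, _); field; exact: q_neq0.
Qed.

Lemma middle_contr1 k ab :
  middle k.+1 (map_ends contr1 ab) = map_ends contr1 (middle k ab).
Proof.
by rewrite /middle /map_ends /contr1 /= halfgapS; congr (_, _); field; exact: q_neq0.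
Qed.

Lemma halves_contr0 k ab :
  halves k.+1 (map_ends contr0 ab) = map (map_ends contr0) (halves k ab).
Proof. by rewrite /halves middle_contr0. Qed.

Lemma halves_contr1 k ab :
  halves k.+1 (map_ends contr1 ab) = map (map_ends contr1) (halves k ab).
Proof. by rewrite /halves middle_contr1. Qed.

Lemma comps_succ n :
  comps L q n.+1 =
  map (map_ends contr0) (comps L q n) ++ map (map_ends contr1) (comps L q n).
Proof.
have compsS m : comps L q m.+1 = flatten (map (halves m.+1) (comps L q m)) by [].
elim: n => [|n IH].
  rewrite /= /halves /middle /map_ends /contr0 /contr1 /halfgap /= expr1.
  by rewrite !mul0r !add0r -L_div_q -L_sub_L_div_q [L / q + _]addrC subrK.
rewrite [LHS]compsS [in LHS]IH map_cat flatten_cat -!map_comp.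
rewrite (eq_map (halves_contr0 n.+1)) (eq_map (halves_contr1 n.+1)).
by rewrite [in RHS]compsS !map_flatten -!map_comp.
Qed.

Lemma Jstage_succ n : (0 < n)%N ->
  Jstage L q n.+1 =
  map (map_ends contr0) (Jstage L q n) ++ map (map_ends contr1) (Jstage L q n).
Proof.
case: n => // n _; have JstageE m : Jstage L q m = map (middle m) (comps L q m.-1) by [].
rewrite !JstageE comps_succ map_cat -!map_comp.
by rewrite (eq_map (middle_contr0 n.+1)) (eq_map (middle_contr1 n.+1)) !map_comp.
Qed.

Lemma Jstage1 : Jstage L q 1 = [:: (L / q, L - L / q)].
Proof.
rewrite /Jstage /= /halfgap expr1 add0r.
by rewrite -L_div_q -L_sub_L_div_q.
Qed.

Lemma Jstage_length n ab : ab \in Jstage L q n -> ab.2 - ab.1 = (q ^+ n)^-1.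
Proof. by case/mapP => cd _ -> /=; lra. Qed.

Lemma contr0_0 : contr0 0 = 0. Proof. by rewrite /contr0 mul0r. Qed.
Lemma contr1_0 : contr1 0 = L - L / q. Proof. by rewrite /contr1 mul0r add0r. Qed.
Lemma contr1_L : contr1 L = L. Proof. by rewrite /contr1 addrC subrK. Qed.

Lemma contr0K x : contr0 (x * q) = x.
Proof. by rewrite /contr0 mulfK ?q_neq0. Qed.
Lemma contr1K x : contr1 ((x - (L - L / q)) * q) = x.
Proof. by rewrite /contr1 mulfK ?q_neq0 // subrK. Qed.

Lemma lt_contr0 x y : (contr0 x < contr0 y) = (x < y).
Proof. by rewrite ltr_pM2r // invr_gt0 q_gt0. Qed.
Lemma le_contr0 x y : (contr0 x <= contr0 y) = (x <= y).
Proof. by rewrite ler_pM2r // invr_gt0 q_gt0. Qed.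
Lemma lt_contr1 x y : (contr1 x < contr1 y) = (x < y).
Proof. by rewrite ltrD2r lt_contr0. Qed.
Lemma le_contr1 x y : (contr1 x <= contr1 y) = (x <= y).
Proof. by rewrite lerD2r le_contr0. Qed.

Lemma contr0_itv y : 0 <= y <= L -> 0 <= contr0 y <= L / q.
Proof.
case/andP=> y0 yL; have := le_contr0 0 y; have := le_contr0 y L.
by rewrite contr0_0 y0 yL => -> ->.
Qed.

Lemma contr1_itv y : 0 <= y <= L -> L - L / q <= contr1 y <= L.
Proof.
case/andP=> y0 yL; have := le_contr1 0 y; have := le_contr1 y L.
by rewrite contr1_0 contr1_L y0 yL => -> ->.
Qed.

Lemma map_ends_contr0_Jstage n ab : (0 < n)%N -> ab \in Jstage L q n ->
  map_ends contr0 ab \in Jstage L q n.+1.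
Proof. by move=> n0 abJ; rewrite Jstage_succ // mem_cat map_f. Qed.

Lemma map_ends_contr1_Jstage n ab : (0 < n)%N -> ab \in Jstage L q n ->
  map_ends contr1 ab \in Jstage L q n.+1.
Proof. by move=> n0 abJ; rewrite Jstage_succ // mem_cat map_f ?orbT. Qed.

Lemma gap0E x : gap 0 x <-> L / q < x < L - L / q.
Proof.
rewrite /gap Jstage1; split; first by case=> ab; rewrite inE => /eqP ->.
by exists (L / q, L - L / q); rewrite ?inE.
Qed.

Lemma gapS n x :
  gap n.+1 x <-> exists2 y, gap n y & x = contr0 y \/ x = contr1 y.
Proof.
split.
  case=> ab; rewrite Jstage_succ // mem_cat => /orP[]/mapP[ab' ab'J ->] /=.
    rewrite -[x]contr0K !lt_contr0 => ab'x.
    by exists (x * q); [exists ab' | left].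
  rewrite -[x]contr1K !lt_contr1 => ab'x.
  by exists ((x - (L - L / q)) * q); [exists ab' | right].
case=> y [ab abJ aby] [->|->].
  by exists (map_ends contr0 ab); rewrite ?map_ends_contr0_Jstage //= !lt_contr0.
by exists (map_ends contr1 ab); rewrite ?map_ends_contr1_Jstage //= !lt_contr1.
Qed.

Lemma gap_itv n x : gap n x -> 0 < x < L.
Proof.
elim: n x => [x /gap0E | n IH x /gapS[y /IH y0L [->|->]]]; have := first_gap_bounds.
- lra.
- by move: y0L; rewrite -(lt_contr0 0) -(lt_contr0 y L) contr0_0 /contr0; lra.
- by move: y0L; rewrite -(lt_contr1 0) -(lt_contr1 y L) contr1_0 contr1_L; lra.
Qed.

Lemma gapS_contr0 n y : 0 <= y <= L -> gap n.+1 (contr0 y) <-> gap n y.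
Proof.
move=> y0L; split => [/gapS[y' gy' []]|gy]; last by apply/gapS; exists y; [|left].
  by move/(mulIf (invr_neq0 q_neq0)) ->.
move=> e; exfalso.
have : contr1 0 < contr1 y' by rewrite lt_contr1; case/andP: (gap_itv gy').
have : contr0 y <= contr0 L by rewrite le_contr0; case/andP: y0L.
by rewrite -e contr1_0 /contr0; have := first_gap_bounds; lra.
Qed.

Lemma gapS_contr1 n y : 0 <= y <= L -> gap n.+1 (contr1 y) <-> gap n y.
Proof.
move=> y0L; split => [/gapS[y' gy' []]|gy]; last by apply/gapS; exists y; [|right].
  move=> e; exfalso.
  have : contr0 y' < contr0 L by rewrite lt_contr0; case/andP: (gap_itv gy').
  have : contr1 0 <= contr1 y by rewrite le_contr1; case/andP: y0L.
  by rewrite e contr1_0 /contr0; have := first_gap_bounds; lra.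
by move/addIr/(mulIf (invr_neq0 q_neq0)) ->.
Qed.

Lemma removed_gap x : removed L q x <-> exists n, gap n x.
Proof.
split; first by case=> -[|n] [//] gx; exists n.
by case=> n gx; exists n.+1.
Qed.

Lemma removed_contr0 y : 0 <= y <= L -> removed L q (contr0 y) <-> removed L q y.
Proof.
move=> y0L; rewrite !removed_gap; split => -[n]; last by exists n.+1; apply/gapS_contr0.
case: n => [/gap0E/andP[+ _]|n /gapS_contr0 gy]; last by exists n; apply: gy.
have : contr0 y <= contr0 L by rewrite le_contr0; case/andP: y0L.
by rewrite /contr0; lra.
Qed.

Lemma removed_contr1 y : 0 <= y <= L -> removed L q (contr1 y) <-> removed L q y.
Proof.
move=> y0L; rewrite !removed_gap; split => -[n]; last by exists n.+1; apply/gapS_contr1.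
case: n => [/gap0E/andP[_]|n /gapS_contr1 gy]; last by exists n; apply: gy.
have : contr1 0 <= contr1 y by rewrite le_contr1; case/andP: y0L.
by rewrite contr1_0; lra.
Qed.

Local Notation K := (`[0, L] `\` removed L q).

Lemma K_contr0 y : K y -> K (contr0 y).
Proof.
rewrite /= !in_itv /= => -[y0L ry]; split; last by move/(removed_contr0 y0L).
by have := contr0_itv y0L; have := first_gap_bounds; lra.
Qed.

Lemma K_contr1 y : K y -> K (contr1 y).
Proof.
rewrite /= !in_itv /= => -[y0L ry]; split; last by move/(removed_contr1 y0L).
by have := contr1_itv y0L; have := first_gap_bounds; lra.
Qed.

Lemma K_cases x : K x -> exists2 y, K y & x = contr0 y \/ x = contr1 y.
Proof.
rewrite /= in_itv /= => -[x0L rx].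
have : x <= L / q \/ L - L / q <= x.
  case: (leP x (L / q)) => [|xLq]; [by left | right; rewrite leNgt].
  by apply/negP => xc; apply: rx; exists 1%N; split => //; apply/gap0E/andP.
case=> xLq; [exists (x * q); last by left; rewrite contr0K
            | exists ((x - (L - L / q)) * q); last by right; rewrite contr1K].
- have y0L : 0 <= x * q <= L.
    by rewrite -(le_contr0 0) -(le_contr0 _ L) contr0_0 contr0K /contr0; lra.
  by rewrite /= in_itv /= y0L; split=> // /(removed_contr0 y0L); rewrite contr0K.
- have y0L : 0 <= (x - (L - L / q)) * q <= L.
    by rewrite -(le_contr1 0) -(le_contr1 _ L) contr1_0 contr1_L contr1K; lra.
  by rewrite /= in_itv /= y0L; split=> // /(removed_contr1 y0L); rewrite contr1K.
Qed.

End SelfSimilarGaps.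

Section Constants.
Variable R : realType.

Definition cbrt3 : R := 3 `^ 3^-1.

Lemma cbrt3_gt0 : 0 < cbrt3. Proof. by rewrite powR_gt0. Qed.

Lemma cbrt3_cube : cbrt3 ^+ 3 = 3.
Proof. by rewrite /cbrt3 -powR_mulrn ?powR_ge0 // -powRrM mulVf ?powRr1. Qed.

Lemma q23E : q23 R = cbrt3 ^+ 2.
Proof. by rewrite /q23 /cbrt3 -powR_mulrn ?powR_ge0 // -powRrM mulrC. Qed.

Lemma sqrt_q23 : Num.sqrt (q23 R) = cbrt3.
Proof. by rewrite q23E sqrtr_sqr ger0_norm // ltW // cbrt3_gt0. Qed.

Lemma q23_mul_sqrt : q23 R * Num.sqrt (q23 R) = 3.
Proof. by rewrite sqrt_q23 q23E -exprSr cbrt3_cube. Qed.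

Lemma q23_gt2 : 2 < q23 R.
Proof.
rewrite q23E ltNge; apply/negP => le2.
have := cbrt3_cube; have := cbrt3_gt0; rewrite exprS; nra.
Qed.

Lemma Mconst_q23 : Mconst R * (q23 R - 2) = 1.
Proof. by rewrite /Mconst mulVf // subr_eq0 gt_eqF // q23_gt2. Qed.

End Constants.

Section Tent.
Variable R : realType.
Implicit Types a b c k x y : R.

Definition tent a b x := 4 / Num.sqrt (b - a) * Num.min (x - a) (b - x).

Lemma tentE a b x :
  tent a b x = 4 / Num.sqrt (b - a) * ((b - a) / 2 - `|x - (a + b) / 2|).
Proof.
rewrite /tent; congr (_ * _); case: (leP x ((a + b) / 2)) => xm.
  by rewrite min_l ?ler0_norm ?subr_le0 //; lra.
by rewrite min_r ?gtr0_norm ?subr_gt0 //; lra.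
Qed.

Lemma tent_gt0 a b x : a < x < b -> 0 < tent a b x.
Proof.
move=> axb; rewrite /tent mulr_gt0 ?divr_gt0 ?sqrtr_gt0 ?subr_gt0 ?lt_min //; lra.
Qed.

Lemma dist_mid_lipschitz a b x y :
  `| `|x - (a + b) / 2| - `|y - (a + b) / 2| | <= `|y - x|.
Proof.
have := ler_dist_dist (x - (a + b) / 2) (y - (a + b) / 2).
have -> : x - (a + b) / 2 - (y - (a + b) / 2) = - (y - x) by ring.
by rewrite normrN.
Qed.

Lemma tent_sqr_le a b x y : a < y < b -> ~ (a < x < b) ->
  tent a b y ^+ 2 <= 8 * `|y - x|.
Proof.
move=> ayb xout; have ab : 0 < b - a by lra.
set t := Num.sqrt (b - a); have t0 : 0 < t by rewrite sqrtr_gt0.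
have tt : t ^+ 2 = b - a by rewrite sqr_sqrtr // ltW.
set m := (b - a) / 2 - `|y - (a + b) / 2|.
have m_ge0 : 0 <= m by rewrite subr_ge0 ler_norml; lra.
have m_le : m <= `|y - x|.
  have : (b - a) / 2 <= `|x - (a + b) / 2|.
    by rewrite leNgt; apply/negP; rewrite ltr_norml => h; apply: xout; lra.
  have := le_trans (ler_norm _) (dist_mid_lipschitz a b x y); rewrite /m; lra.
rewrite tentE -/t -/m -(ler_pM2r (exprn_gt0 2 t0)) -exprMn.
have m_half : 2 * m <= b - a by rewrite /m; have := normr_ge0 (y - (a + b) / 2); lra.
by rewrite mulrAC divfK ?gt_eqF // tt; nra.
Qed.

Lemma tent_lipschitz a b x y :
  `|tent a b y - tent a b x| <= 4 / Num.sqrt (b - a) * `|y - x|.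
Proof.
rewrite !tentE -mulrBr normrM ger0_norm ?divr_ge0 ?sqrtr_ge0 //.
rewrite ler_wpM2l ?divr_ge0 ?sqrtr_ge0 //.
have -> : (b - a) / 2 - `|y - (a + b) / 2| - ((b - a) / 2 - `|x - (a + b) / 2|)
  = `|x - (a + b) / 2| - `|y - (a + b) / 2| by ring.
exact: dist_mid_lipschitz.
Qed.

Lemma tent_affine a b c k y : a < b -> 0 < k ->
  tent (a / k + c) (b / k + c) (y / k + c) = tent a b y / Num.sqrt k.
Proof.
move=> ab k0; rewrite /tent.
have -> : b / k + c - (a / k + c) = (b - a) * k^-1 by ring.
have -> : y / k + c - (a / k + c) = (y - a) * k^-1 by ring.
have -> : b / k + c - (y / k + c) = (b - y) * k^-1 by ring.
rewrite -minr_pMl ?invr_ge0 ?ltW // sqrtrM ?subr_ge0 ?ltW // sqrtrV ?ltW //.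
have sk0 : Num.sqrt k != 0 by rewrite gt_eqF // sqrtr_gt0.
have skk : k = Num.sqrt k ^+ 2 by rewrite sqr_sqrtr ?ltW.
rewrite [in X in _ * X = _]skk; field.
by rewrite sk0 gt_eqF // sqrtr_gt0 subr_gt0.
Qed.

End Tent.

Lemma within_continuous_itvP (R : realType) (a b : R) (g : R -> R) x :
  {within `[a, b], continuous g} -> x \in `[a, b] -> forall e, 0 < e ->
  exists2 d, 0 < d & forall t, t \in `[a, b] -> `|t - x| < d -> `|g t - g x| < e.
Proof.
move=> /subspace_continuousP /(_ x) gx xab e e0.
have /cvgrPdist_lt/(_ e e0) := gx xab; rewrite near_withinE => /nbhs_ballP[d d0 hd].
by exists d => // t tab tx; rewrite distrC; apply: hd; rewrite // /ball /= distrC.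
Qed.

Lemma Rintegral_cst_itv (R : realType) (u v c : R) : u <= v ->
  Rintegral mu `[u, v] (cst c) = c * (v - u).
Proof.
move=> uv; rewrite Rintegral_cst //; congr (_ * _).
transitivity (fine (mu [set` `[u, v]])); first by [].
by rewrite lebesgue_measure_itv /= lte_fin; case: ltgtP uv => //= -> _; rewrite subrr.
Qed.

Lemma is_derive_affine (R : realType) (k c x : R) :
  is_derive x 1 (fun t : R => t * k + c) k.
Proof. by apply: is_derive_eq; rewrite scaler0 add0r addr0 /GRing.scale /= mulr1. Qed.

Lemma is_derive_half_sqr (R : realType) (k t0 x : R) :
  is_derive x 1 (fun t : R => k / 2 * ((t - t0) * (t - t0))) (k * (x - t0)).
Proof. by apply: is_derive_eq; rewrite /GRing.scale /=; field. Qed.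

Lemma derivable_oo_LRcontinuous_everywhere (R : realType) (F dF : R -> R) (u v : R) :
  (forall t : R, is_derive t 1 F (dF t)) -> derivable_oo_LRcontinuous F u v.
Proof.
move=> FdF; have Fd t : derivable F t 1 := @ex_derive _ _ _ _ _ _ _ (FdF t).
have Fc : continuous F.
  by move=> t; apply/differentiable_continuous/derivable1_diffP; exact: Fd.
split; first by move=> t _; exact: Fd.
- by apply: cvg_at_right_filter; exact: Fc.
- by apply: cvg_at_left_filter; exact: Fc.
Qed.

Section Primitive.
Variables (R : realType) (a b : R) (g : R -> R).
Hypothesis g_cont : {within `[a, b], continuous g}.
Implicit Types u v w x : R.

Definition primitive x := Rintegral mu `[a, x] g.

Lemma integrable_subitv u v : a <= u -> v <= b -> mu.-integrable `[u, v] (EFin \o g).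
Proof.
move=> au vb; have gi : mu.-integrable `[a, b] (EFin \o g).
  by apply: continuous_compact_integrable; [exact: segment_compact | exact: g_cont].
by apply: integrableS gi => //; apply: subset_itvScc; rewrite bnd_simp.
Qed.

Lemma primitiveB u v : a <= u -> u <= v -> v <= b ->
  primitive v - primitive u = Rintegral mu `[u, v] g.
Proof.
move=> au uv vb; rewrite /primitive.
rewrite (@Rintegral_itvB _ _ (BLeft a) (BRight v) u) ?bnd_simp //; last first.
  exact: integrable_subitv.
rewrite Rintegral_itv_obnd_cbnd //.
by apply: integrableS (integrable_subitv au vb) => //; apply: subset_itv_oc_cc.
Qed.

Lemma Rintegral_itv_bounds u v lo hi : a <= u -> u <= v -> v <= b ->
  (forall t, u <= t <= v -> lo <= g t <= hi) ->
  lo * (v - u) <= Rintegral mu `[u, v] g <= hi * (v - u).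
Proof.
move=> au uv vb lohi; have gi := integrable_subitv au vb.
have ci c : mu.-integrable `[u, v] (EFin \o cst c).
  apply: continuous_compact_integrable; first exact: segment_compact.
  by apply: continuous_subspaceT => x; apply: cst_continuous.
rewrite -!Rintegral_cst_itv //; apply/andP; split.
all: apply: le_Rintegral => //; try exact: ci; try exact: gi.
all: by move=> t; rewrite /= in_itv => /lohi/andP[].
Qed.

Lemma primitive_continuous : a <= b -> {within `[a, b], continuous primitive}.
Proof.
move=> ab; exact: parameterized_integral_continuous ab (integrable_subitv (lexx a) (lexx b)).
Qed.

Lemma primitive_has_deriv x : x \in `[a, b] ->
  has_deriv_within `[a, b] primitive x (g x).
Proof.
move=> xab; apply/cvgrPdist_le => e e0.
have [d d0 hd] := within_continuous_itvP g_cont xab e0.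
rewrite near_withinE /dnbhs near_withinE; apply/nbhs_ballP.
exists d => // t /= xtd tx tab; rewrite /ball /= distrC in xtd.
move: xab tab; rewrite !in_itv /= => /andP[le_ax le_xb] /andP[le_at le_tb].
have gu u : (x <= u <= t) \/ (t <= u <= x) -> g x - e <= g u <= g x + e.
  move=> ux; have uab : u \in `[a, b].
    by rewrite in_itv /=; case: ux => /andP[? ?]; apply/andP; split; lra.
  have : `|u - x| < d.
    apply: le_lt_trans xtd; rewrite ler_norml.
    have := ler_norm (t - x); have : x - t <= `|t - x| by rewrite distrC ler_norm.
    by case: ux => /andP[? ?] ? ?; apply/andP; split; lra.
  by move/(hd _ uab); rewrite ltr_norml => /andP[? ?]; apply/andP; split; lra.
have tx0 : t - x != 0 by rewrite subr_eq0.
set Q := (_ - _) / _; have eQ : primitive t - primitive x = Q * (t - x) by rewrite /Q divfK.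
rewrite ler_norml; case: (ltP x t) => xt.
  have /andP[] := Rintegral_itv_bounds le_ax (ltW xt) le_tb (fun u ux => gu u (or_introl ux)).
  by rewrite -(primitiveB le_ax (ltW xt) le_tb) eQ => ? ?; apply/andP; split; nra.
have /andP[] := Rintegral_itv_bounds le_at xt le_xb (fun u ux => gu u (or_intror ux)).
rewrite -(primitiveB le_at xt le_xb).
have -> : primitive x - primitive t = Q * (x - t) by rewrite -opprB eQ; ring.
have xt' : t < x by rewrite lt_neqAle tx.
by move=> ? ?; apply/andP; split; nra.
Qed.

Lemma primitive_le u v : a <= u -> u <= v -> v <= b ->
  (forall t, u <= t <= v -> 0 <= g t) -> primitive u <= primitive v.
Proof.
move=> au uv vb g0; rewrite -subr_ge0 primitiveB //.
by apply: Rintegral_ge0 => t; rewrite /= in_itv => /g0.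
Qed.

Lemma primitive_lt u w v : a <= u -> v <= b -> u < w < v ->
  (forall t, u <= t <= v -> 0 <= g t) -> 0 < g w -> primitive u < primitive v.
Proof.
move=> au vb /andP[uw wv] g0 gw0.
have wab : w \in `[a, b] by rewrite in_itv /=; apply/andP; split; lra.
have [d d0 hd] := within_continuous_itvP g_cont wab (divr_gt0 gw0 (ltr0Sn _ 1)).
set r := Num.min d (Num.min (w - u) (v - w)) / 2.
have r0 : 0 < r by rewrite divr_gt0 // !lt_min d0 !subr_gt0 uw wv.
have [rd ru rv] : [/\ 2 * r <= d, 2 * r <= w - u & 2 * r <= v - w].
  by rewrite /r mulrC divfK // !ge_min !lexx ?orbT.
have g0_in s s' : u <= s -> s' <= v -> forall t, s <= t <= s' -> 0 <= g t.
  by move=> us s'v t /andP[? ?]; apply: g0; apply/andP; split; lra.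
have lo_r : primitive u <= primitive (w - r).
  by apply: primitive_le (g0_in _ _ _ _) => //; lra.
have hi_r : primitive (w + r) <= primitive v.
  by apply: primitive_le (g0_in _ _ _ _) => //; lra.
have /andP[mid _] : (g w / 2) * (w + r - (w - r)) <= Rintegral mu `[w - r, w + r] g
                    <= (3 * g w / 2) * (w + r - (w - r)).
  apply: Rintegral_itv_bounds; [lra | lra | lra |] => t /andP[? ?].
  have tab : t \in `[a, b] by rewrite in_itv /=; apply/andP; split; lra.
  have : `|t - w| < d by rewrite ltr_norml; apply/andP; split; lra.
  by move/(hd _ tab); rewrite ltr_norml => /andP[? ?]; apply/andP; split; lra.
rewrite -primitiveB in mid; [|lra|lra|lra].
have : 0 < g w * r by rewrite mulr_gt0.
lra.
Qed.

Lemma Rintegral_affine u v k c : 0 < k -> u <= v -> a <= u / k + c -> v / k + c <= b ->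
  Rintegral mu `[u / k + c, v / k + c] g =
  Rintegral mu `[u, v] (fun t => g (t / k + c) / k).
Proof.
move=> k0 uv auk vkb; set F := fun t : R => t * k^-1 + c.
have dF (t : R) : is_derive t 1 F k^-1 := is_derive_affine _ _ t.
have F'E : derive1 F = cst k^-1.
  by apply/funext => t; rewrite derive1E (@derive_val _ _ _ _ _ _ _ (dF t)).
rewrite /Rintegral (@integration_by_substitution_increasing _ F g u v uv) ?F'E //.
- by move=> x y _ _ xy; rewrite ltrD2r ltr_pM2r ?invr_gt0.
- by move=> t _; exact: cst_continuous.
- by apply/cvg_ex; exists k^-1; exact: cvg_cst.
- by apply/cvg_ex; exists k^-1; exact: cvg_cst.
- exact: derivable_oo_LRcontinuous_everywhere dF.
- by apply: continuous_subspaceW g_cont; apply: subset_itvScc; rewrite bnd_simp.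
Qed.

Lemma Rintegral_linear u v k t0 : a <= u -> u < v -> v <= b ->
  (forall t, u < t < v -> g t = k * (t - t0)) ->
  Rintegral mu `[u, v] g = k / 2 * ((v - t0) ^+ 2 - (u - t0) ^+ 2).
Proof.
move=> au uv vb gE; set F := fun t : R => k / 2 * ((t - t0) * (t - t0)).
have dF (t : R) : is_derive t 1 F (k * (t - t0)) := is_derive_half_sqr _ _ t.
rewrite /Rintegral (@continuous_FTC2 _ g F u v uv) /=; first by rewrite /F; ring.
- by apply: continuous_subspaceW g_cont; apply: subset_itvScc; rewrite bnd_simp.
- exact: derivable_oo_LRcontinuous_everywhere dF.
- by move=> t; rewrite in_itv /= => ut; rewrite derive1E (@derive_val _ _ _ _ _ _ _ (dF t)) gE.
Qed.

Lemma Rintegral_tent u v : a <= u -> u < v -> v <= b ->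
  (forall t, u < t < v -> g t = tent u v t) ->
  Rintegral mu `[u, v] g = (v - u) * Num.sqrt (v - u).
Proof.
move=> au uv vb gE; set m := (u + v) / 2; set k := 4 / Num.sqrt (v - u).
have [um mv] : u < m /\ m < v by rewrite /m; split; lra.
have int_left : Rintegral mu `[u, m] g = k / 2 * ((m - u) ^+ 2 - (u - u) ^+ 2).
  apply: Rintegral_linear => //; first exact: le_trans (ltW mv) vb.
  move=> t /andP[ut]; rewrite /m => tm; have utv : u < t < v by apply/andP; split; lra.
  by rewrite gE // /tent min_l; [rewrite /k | lra].
have int_right : Rintegral mu `[m, v] g = - k / 2 * ((v - v) ^+ 2 - (m - v) ^+ 2).
  apply: Rintegral_linear => //; first exact: le_trans au (ltW um).
  move=> t /andP[+ tv]; rewrite /m => mt; have utv : u < t < v by apply/andP; split; lra.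
  by rewrite gE // /tent min_r; [rewrite /k; ring | lra].
have -> : Rintegral mu `[u, v] g = Rintegral mu `[u, m] g + Rintegral mu `[m, v] g.
  rewrite -(primitiveB au (ltW uv) vb) -(primitiveB au (ltW um) (le_trans (ltW mv) vb)).
  by rewrite -(primitiveB (le_trans au (ltW um)) (ltW mv) vb); ring.
have sqr_sqrt : Num.sqrt (v - u) ^+ 2 = v - u by rewrite sqr_sqrtr // subr_ge0 ltW.
have sqrt_neq0 : Num.sqrt (v - u) != 0 by rewrite gt_eqF // sqrtr_gt0 subr_gt0.
rewrite int_left int_right /k /m; set s := Num.sqrt (v - u) in sqr_sqrt sqrt_neq0 *.
have -> : v = u + s ^+ 2 by rewrite sqr_sqrt; ring.
by field.
Qed.

End Primitive.

Section SmoothCantorFunction.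
Variables (R : realType) (g : R -> R).
Local Notation M := (Mconst R).
Local Notation q := (q23 R).
Local Notation A := (@Aset R).
Local Notation F := (primitive 0 g).

Hypothesis g_A : forall x, A x -> g x = 0.
Hypothesis g_Jstage : forall (n : nat) (ab : R * R), (0 < n)%N -> ab \in Jstage M q n ->
  forall x, ab.1 < x < ab.2 -> g x = tent ab.1 ab.2 x.

Let q_gt2 : 2 < q := q23_gt2 R.
Let Mq2 : M * (q - 2) = 1 := Mconst_q23 R.
Let three_gt2 : 2 < 3 :> R. Proof. lra. Qed.
Let one3 : 1 * (3 - 2) = 1 :> R. Proof. lra. Qed.
Let M_gt0 : 0 < M := L_gt0 q_gt2 Mq2.
Let q23_gt0 : 0 < q := q_gt0 q_gt2.
Let M_itv : 0 <= M <= M. Proof. by rewrite lexx ltW. Qed.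

Lemma Aset_or_removed y : 0 <= y <= M -> A y \/ removed M q y.
Proof.
move=> y0M; have [ry|ry] := pselect (removed M q y); [by right | left].
by split; rewrite //= in_itv.
Qed.

Lemma g_gt0 y : removed M q y -> 0 < g y.
Proof. by case=> n [n0 [ab abJ aby]]; rewrite (g_Jstage n0 abJ aby) tent_gt0. Qed.

Lemma g_ge0 y : 0 <= y <= M -> 0 <= g y.
Proof. by case/Aset_or_removed => [/g_A -> // | /g_gt0/ltW]. Qed.

Lemma g_eq0 y : 0 <= y <= M -> g y = 0 <-> A y.
Proof.
move=> y0M; split; last exact: g_A.
by case: (Aset_or_removed y0M) => // /g_gt0; rewrite lt_neqAle eq_sym => /andP[/eqP].
Qed.

Lemma g_sqr_le x y : A x -> 0 <= y <= M -> g y ^+ 2 <= 8 * `|y - x|.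
Proof.
move=> xA /Aset_or_removed [/g_A ->|]; first by rewrite expr0n /= mulr_ge0.
case=> n [n0 [ab abJ aby]]; rewrite (g_Jstage n0 abJ aby).
apply: tent_sqr_le => // abx; case: xA => _; apply.
by exists n; split => //; exists ab.
Qed.

Lemma g_continuous_at x : 0 <= x <= M -> forall e, 0 < e ->
  exists2 d, 0 < d & forall y, 0 <= y <= M -> `|y - x| < d -> `|g y - g x| < e.
Proof.
move=> x0M e e0; case: (Aset_or_removed x0M) => [xA|[n [n0 [[a b] abJ /= /andP[ax xb]]]]].
  exists (e ^+ 2 / 8) => [|y y0M yx]; first by rewrite divr_gt0 // exprn_gt0.
  rewrite (g_A xA) subr0 ger0_norm ?g_ge0 //.
  have := g_sqr_le xA y0M; have := g_ge0 y0M.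
  have : 8 * `|y - x| < e ^+ 2 by rewrite mulrC -ltr_pdivlMr.
  by move=> ? ? ?; rewrite ltNge; apply/negP => ?; nra.
set k := 4 / Num.sqrt (b - a).
have k0 : 0 < k by rewrite divr_gt0 // sqrtr_gt0 subr_gt0 (lt_trans ax).
exists (Num.min (Num.min (x - a) (b - x)) (e / k)) => [|y _].
  by rewrite !lt_min !subr_gt0 ax xb divr_gt0.
rewrite !lt_min => /andP[/andP[yxa yxb] yxe].
have ayb : a < y < b by move: yxa yxb; rewrite !ltr_norml; lra.
rewrite (g_Jstage n0 abJ ayb) (g_Jstage n0 abJ (_ : a < x < b)) ?ax //=.
apply: le_lt_trans (tent_lipschitz _ _ _ _) _.
by rewrite -/k mulrC -ltr_pdivlMr.
Qed.

Lemma g_continuous : {within `[0, M], continuous g}.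
Proof.
apply/subspace_continuousP => x /= xM; apply/cvgrPdist_lt => e e0.
have x0M : 0 <= x <= M by move: xM; rewrite in_itv.
have [d d0 hd] := g_continuous_at x0M e0.
rewrite near_withinE; apply/nbhs_ballP; exists d => //= y.
rewrite /ball /= => xyd yM; rewrite distrC; apply: hd; last by rewrite distrC.
by move: yM; rewrite /= in_itv.
Qed.

Lemma g_contr0 y : 0 <= y <= M -> g (contr0 q y) = g y / Num.sqrt q.
Proof.
move=> y0M; case: (Aset_or_removed y0M) => [yA|[n [n0 [ab abJ aby]]]].
  by rewrite (g_A yA) mul0r g_A //; apply: (K_contr0 q_gt2 Mq2).
have ab12 : ab.1 < ab.2 by case/andP: aby; exact: lt_trans.
rewrite (g_Jstage n0 abJ aby) -(tent_affine 0 y ab12 q23_gt0) !addr0.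
apply: (g_Jstage (ltn0Sn n) (map_ends_contr0_Jstage q_gt2 Mq2 n0 abJ)).
by rewrite /= !(lt_contr0 q_gt2).
Qed.

Lemma g_contr1 y : 0 <= y <= M -> g (contr1 M q y) = g y / Num.sqrt q.
Proof.
move=> y0M; case: (Aset_or_removed y0M) => [yA|[n [n0 [ab abJ aby]]]].
  by rewrite (g_A yA) mul0r g_A //; apply: (K_contr1 q_gt2 Mq2).
have ab12 : ab.1 < ab.2 by case/andP: aby; exact: lt_trans.
rewrite (g_Jstage n0 abJ aby) -(tent_affine (M - M / q) y ab12 q23_gt0).
apply: (g_Jstage (ltn0Sn n) (map_ends_contr1_Jstage q_gt2 Mq2 n0 abJ)).
by rewrite /= !(lt_contr1 _ q_gt2).
Qed.

Lemma Rintegral_image_contr c y : 0 <= y <= M -> 0 <= c -> y / q + c <= M ->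
  (forall t, 0 <= t <= y -> g (t / q + c) = g t / Num.sqrt q) ->
  Rintegral mu `[c, y / q + c] g = F y / 3.
Proof.
move=> /andP[y0 yM] c0 yqM gE.
have := @Rintegral_affine _ _ _ _ g_continuous 0 y q c q23_gt0 y0.
rewrite mul0r add0r => -> //.
transitivity (Rintegral mu `[0, y] (fun t => g t * 3^-1)).
  apply: eq_Rintegral => t; rewrite inE /= in_itv /= => t0y; rewrite gE // -(q23_mul_sqrt R).
  by field; rewrite gt_eqF ?sqrtr_gt0 // gt_eqF.
by rewrite RintegralZr // (integrable_subitv g_continuous (lexx 0) yM).
Qed.

Lemma F0 : F 0 = 0.
Proof. by rewrite /primitive set_itv1 Rintegral_set1. Qed.

Lemma F_le u v : 0 <= u -> u <= v -> v <= M -> F u <= F v.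
Proof.
move=> u0 uv vM; apply: (primitive_le g_continuous) => // t /andP[ut tv].
by apply: g_ge0; apply/andP; split; lra.
Qed.

Lemma F_contr0 y : 0 <= y <= M -> F (contr0 q y) = contr0 3 (F y).
Proof.
move=> y0M; have := contr0_itv q_gt2 y0M; have := first_gap_bounds q_gt2 Mq2.
rewrite /contr0 => ? ?; rewrite /primitive -[y / q]addr0 Rintegral_image_contr //; [lra |].
by move=> t ?; rewrite addr0 g_contr0 //; apply/andP; split; lra.
Qed.

Lemma F_contr1_shift y : 0 <= y <= M ->
  F (contr1 M q y) = F (contr1 M q 0) + F y / 3.
Proof.
move=> y0M; have := contr1_itv q_gt2 y0M; have := first_gap_bounds q_gt2 Mq2.
rewrite (contr1_0 M q) => gapM cy.
rewrite -[LHS](subrK (F (M - M / q))) addrC (primitiveB g_continuous); [|lra|lra|lra].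
rewrite /contr1 in cy *; rewrite Rintegral_image_contr //; [lra | lra |].
by move=> t ?; rewrite g_contr1 //; apply/andP; split; lra.
Qed.

Lemma F_first_gap_mass : F (M - M / q) - F (M / q) = 1 / 3.
Proof.
have := first_gap_bounds q_gt2 Mq2 => gapM.
have J1 : (M / q, M - M / q) \in Jstage M q 1 by rewrite (Jstage1 q_gt2 Mq2) inE.
rewrite (primitiveB g_continuous) ?(Rintegral_tent g_continuous) //; try lra.
  rewrite (Jstage_length J1) expr1 sqrtrV ?ltW // -(q23_mul_sqrt R).
  by field; rewrite gt_eqF ?sqrtr_gt0 // gt_eqF.
exact: g_Jstage J1.
Qed.

Lemma F_M : F M = 1.
Proof.
have := F_contr1_shift M_itv; have := F_contr0 M_itv; have := F_first_gap_mass.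
rewrite (contr1_L M q) (contr1_0 M q) /contr0.
by move: (F M) (F (M / q)) (F (M - M / q)) => a b c; lra.
Qed.

Lemma F_Mq : F (M / q) = 1 / 3.
Proof. by rewrite -[M / q]/(contr0 q M) F_contr0 // F_M. Qed.

Lemma F_M_sub_Mq : F (M - M / q) = 1 - 1 / 3.
Proof. by have := F_first_gap_mass; rewrite F_Mq; move: (F _) => a; lra. Qed.

Lemma F_contr1 y : 0 <= y <= M -> F (contr1 M q y) = contr1 1 3 (F y).
Proof. by move=> y0M; rewrite F_contr1_shift // (contr1_0 M q) F_M_sub_Mq /contr1 addrC. Qed.

Lemma F_itv x : 0 <= x <= M -> 0 <= F x <= 1.
Proof.
case/andP=> x0 xM; have := F_le (lexx 0) x0 xM; have := F_le x0 xM (lexx M).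
by rewrite F0 F_M => -> ->.
Qed.

Lemma F_first_gap x : M / q < x < M - M / q -> 1 / 3 < F x < 1 - 1 / 3.
Proof.
move=> /andP[lx xr]; have gapM := first_gap_bounds q_gt2 Mq2.
have g_gap w : M / q < w < M - M / q -> 0 < g w.
  by move=> /(gap0E q_gt2 Mq2) gw; apply: g_gt0; apply/removed_gap; exists 0%N.
have g_ge0_in t : M / q <= t <= M - M / q -> 0 <= g t.
  by move=> ?; apply: g_ge0; apply/andP; split; lra.
rewrite -F_M_sub_Mq -F_Mq; apply/andP; split.
  apply: (primitive_lt g_continuous (w := (M / q + x) / 2)); try lra.
    by move=> t ?; apply: g_ge0_in; lra.
  by apply: g_gap; lra.
apply: (primitive_lt g_continuous (w := (x + (M - M / q)) / 2)); try lra.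
  by move=> t ?; apply: g_ge0_in; lra.
by apply: g_gap; lra.
Qed.

Lemma F_gap n x : gap M q n x -> gap 1 3 n (F x).
Proof.
elim: n x => [x /(gap0E q_gt2 Mq2)/F_first_gap/(gap0E three_gt2 one3) // | n IH x].
case/(gapS q_gt2 Mq2) => y gy xy; apply/(gapS three_gt2 one3); exists (F y); first exact: IH.
have y0M : 0 <= y <= M by have /andP[? ?] := gap_itv q_gt2 Mq2 gy; rewrite !ltW.
by case: xy => ->; [left; rewrite F_contr0 | right; rewrite F_contr1].
Qed.

Lemma F_Aset x : A x -> @cantor_ternary R (F x).
Proof.
move=> xA; split.
  by rewrite /= in_itv /= F_itv //; case: xA; rewrite /= in_itv.
case/removed_gap => n; elim: n x xA => [|n IH] x /(K_cases q_gt2 Mq2) [y yA xy].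
all: have y0M : 0 <= y <= M by case: yA; rewrite /= in_itv.
all: case: xy => ->; rewrite ?F_contr0 ?F_contr1 //; move: (F_itv y0M).
- move: (F y) => z z01 /(gap0E three_gt2 one3).
  by have := contr0_itv three_gt2 z01; rewrite /contr0; lra.
- move: (F y) => z z01 /(gap0E three_gt2 one3).
  by have := contr1_itv three_gt2 z01; lra.
- by move=> z01 /(gapS_contr0 three_gt2 one3 n z01); exact: IH.
- by move=> z01 /(gapS_contr1 three_gt2 one3 n z01); exact: IH.
Qed.

Lemma F_onto y : @cantor_ternary R y -> exists2 x, A x & F x = y.
Proof.
case; rewrite /= in_itv /= => y01 ny.
have F_cont := primitive_continuous g_continuous (ltW M_gt0).
have [|x xM Fx] := @IVT _ F 0 M y (ltW M_gt0) F_cont.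
  by rewrite F0 F_M min_l ?max_r.
exists x => //; split => // /removed_gap[n gx]; apply: ny.
by apply/removed_gap; exists n; rewrite -Fx; exact: F_gap.
Qed.

End SmoothCantorFunction.

Unset Implicit Arguments.

Theorem lemma4 (R : realType) (g : R -> R) :
  (* g = 0 on A *)
  (forall x, @Aset R x -> g x = 0) ->
  (* g x = 4 / L(J_n^k)^(1/2) * dist(x, boundary J_n^k) on J_n^k *)
  (forall (n : nat) (ab : R * R), (0 < n)%N -> ab \in Jstage (@Mconst R) (@q23 R) n ->
     forall x, ab.1 < x < ab.2 ->
       g x = 4 / Num.sqrt (ab.2 - ab.1) * Num.min (x - ab.1) (ab.2 - x)) ->
  let f := fun x : R => Rintegral lebesgue_measure `[0, x] g in
  (* (1) f is C^1 on [0,M], and (2) f'(x) = 0 iff x in A *)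
  (exists f' : R -> R,
      {within `[0, @Mconst R], continuous f'} /\
      (forall x, x \in `[0, @Mconst R] -> has_deriv_within `[0, @Mconst R] f x (f' x)) /\
      (forall x, x \in `[0, @Mconst R] -> (f' x = 0 <-> @Aset R x))) /\
  (* (3) f(A) = C *)
  f @` @Aset R = @cantor_ternary R.
Proof.
move=> g_A g_Jstage f; have -> : f = primitive 0 g by [].
have g_cont := g_continuous g_A g_Jstage; split.
  exists g; split=> //; split=> x xM; first exact (primitive_has_deriv g_cont xM).
  by apply: g_eq0 => //; move: xM; rewrite in_itv.
apply/seteqP; split=> [_ [x xA <-] | y Cy]; first exact: F_Aset.
by have [x xA Fx] := F_onto g_A g_Jstage Cy; exists x.
Qed.
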